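(* For every oriented link $L$, $$\mathcal A_{\mathcal Q}(L)=\sup_{\mathbb X\in\mathcal Q_{\mathcal F}}a_{\mathbb X}(L,\mathcal P_m,\bar 1),$$ where $\bar 1$ assigns $1$ to every component. More precisely, for every odd prime $p$, every $z\ge1$ and every irreducible $h(t)\in\Lambda_p$ of positive breadth there is an irreducible $h'(t)\in\Lambda_p$ of positive breadth with $a_{(\mathbb F(p,h),* )}(L,\mathcal P_m,\bar z)\le a_{(\mathbb F(p,h'),* )}(L,\mathcal P_m,\bar 1)$, where $\bar z$ assigns $z$ to all components. In particular, for every knot $K$ there exists $\mathbb X\in\mathcal Q_{\mathcal F}$ with $\mathcal A_{\mathcal Q}(K)=a_{\mathbb X}(K,1)$.
   Context: A quandle is a set with operation $*$ satisfying $a*a=a$, $(a*b)*c=(a*c)*(b*c)$ and bijectivity of $x\mapsto x*b$; $a*^0b=a$, $a*^nb=(a*^{n-1}b)*b$. For an odd prime $p$, $\Lambda_p=\mathbb Z_p[t,t^{-1}]$; for $h\in\Lambda_p$ irreducible of positive breadth (breadth = highest minus lowest exponent), $\mathbb F(p,h)=\Lambda_p/(h)$, $\bar t$ the class of $t$, $\mathbb X=(\mathbb F(p,h),* )$ with $a*b=\bar ta+(1-\bar t)b$; $\mathcal Q_{\mathcal F}$ is the set of such. For an oriented link $L$, $\mathcal P_m=(L)$. An $\mathbb X$-coloring of a diagram of $L$ with label $z\ge0$ on all components assigns elements of $\mathbb X$ to arcs so that at each crossing with over-arc color $b$ the under-arcs on the right/left of the oriented over-arc have colors $a$ and $a*^zb$;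 colorings form a vector space of dimension $d$ and $a_{\mathbb X}(L,\mathcal P_m,\bar z)=d-1$ (for a knot, $a_{\mathbb X}(K,z)$). $\mathcal A_{\mathcal Q}(L)=\sup a_{\mathbb X}(L,\mathcal P_m,\bar z)$ over $\mathbb X\in\mathcal Q_{\mathcal F}$ and $z\ge0$; this is finite (bounded by the tunnel number). *)

From HB Require Import structures.
From mathcomp Require Import all_boot all_order all_algebra all_fingroup all_field.
Set Implicit Arguments.
Unset Strict Implicit.
Unset Printing Implicit Defensive.
Import GRing.Theory.
Local Open Scope ring_scope.

(* A diagram has [narcs D] arcs, numbered by 'I_(narcs D), and a list of   *)
(* crossings.  A crossing (o, i, j, s) has over-arc o; the under-strand    *)
(* enters the crossing along arc i and leaves along arc j; s = true for a  *)
(* positive crossing, in which the under-strand passes from the RIGHT to   *)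
(* the LEFT of the oriented over-arc (so i is on the right, j on the       *)
(* left), s = false for a negative crossing (j on the right, i on left).   *)
Record diagram := Diagram {
  narcs : nat;
  xings : seq ('I_narcs * 'I_narcs * 'I_narcs * bool) }.

Definition x_over n (x : 'I_n * 'I_n * 'I_n * bool) := x.1.1.1.
Definition x_in n (x : 'I_n * 'I_n * 'I_n * bool) := x.1.1.2.
Definition x_out n (x : 'I_n * 'I_n * 'I_n * bool) := x.1.2.
Definition x_pos n (x : 'I_n * 'I_n * 'I_n * bool) := x.2.
Definition x_right n (x : 'I_n * 'I_n * 'I_n * bool) :=
  if x_pos x then x_in x else x_out x.
Definition x_left n (x : 'I_n * 'I_n * 'I_n * bool) :=
  if x_pos x then x_out x else x_in x.

(* Well-formedness: at least one arc; every arc ends at most once and      *)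
(* starts at most once as an under-arc, and an arc ends at an undercrossing*)
(* iff it starts at one (otherwise it is a closed crossing-free-below loop)*)
Definition well_formed (D : diagram) : bool :=
  [&& (0 < narcs D)%N,
      uniq [seq x_in x | x <- xings D],
      uniq [seq x_out x | x <- xings D] &
      [forall i : 'I_(narcs D),
         (i \in [seq x_in x | x <- xings D]) ==
         (i \in [seq x_out x | x <- xings D])]].

Definition arc_next (D : diagram) (i : 'I_(narcs D)) : 'I_(narcs D) :=
  match [seq x <- xings D | x_in x == i] with
  | x :: _ => x_out x
  | [::] => i
  end.

Definition is_knot_diagram (D : diagram) : bool :=
  [forall i : 'I_(narcs D), forall j : 'I_(narcs D), fconnect (@arc_next D) i j].

Definition qpow (X : Type) (op : X -> X -> X) (z : nat) (a b : X) : X :=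
  iter z (fun x => op x b) a.

Definition is_coloring (X : eqType) (op : X -> X -> X) (D : diagram) (z : nat)
  (col : 'I_(narcs D) -> X) : bool :=
  all (fun x => col (x_left x) == qpow op z (col (x_right x)) (col (x_over x)))
      (xings D).
Arguments is_coloring {X} op D z col.

Definition alex_op (F : fieldType) (t : F) (a b : F) : F := t * a + (1 - t) * b.

(* F(p,h) = Lambda_p/(h).  Every nonzero ideal (h) of Lambda_p is generated *)
(* by a unique monic polynomial h in F_p[t] with h(0) <> 0, and for such h  *)
(* Lambda_p/(h) = F_p[t]/(h); for h irreducible this is the field           *)
(* {poly %/ h with hI}, in which t-bar is 'qX.                              *)
Definition Fph (p : nat) (h : {poly 'F_p}) (hI : monic_irreducible_poly h) :=
  {poly %/ h with hI}.

Definition tbar (p : nat) (h : {poly 'F_p}) (hI : monic_irreducible_poly h)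
  : Fph hI := 'qX.

Definition colorings (p : nat) (h : {poly 'F_p}) (hI : monic_irreducible_poly h)
  (D : diagram) (z : nat) : {set 'rV[Fph hI]_(narcs D)} :=
  [set c : 'rV[Fph hI]_(narcs D) |
     is_coloring (alex_op (tbar hI)) D z (fun i => c 0 i) ].

Definition coloring_dim (p : nat) (h : {poly 'F_p}) (hI : monic_irreducible_poly h)
  (D : diagram) (z : nat) : nat :=
  \dim <<enum (colorings hI D z)>>%VS.

Definition a_inv (p : nat) (h : {poly 'F_p}) (hI : monic_irreducible_poly h)
  (D : diagram) (z : nat) : nat :=
  (coloring_dim hI D z).-1.

(* breadth of h as an element of Lambda_p (h monic, h(0) <> 0) *)
Definition breadth (p : nat) (h : {poly 'F_p}) : nat := (size h).-1.

Definition admissible (p : nat) (h : {poly 'F_p}) : Prop :=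
  [/\ prime p, odd p, h.[0] != 0 & (0 < breadth h)%N].

From HB Require Import structures.
From mathcomp Require Import all_boot all_order all_algebra all_fingroup all_field.
From mathcomp Require Import mxabelem ring.
From Stdlib Require Import Classical.
Set Implicit Arguments.
Unset Strict Implicit.
Unset Printing Implicit Defensive.
Local Open Scope ring_scope.
Import GRing.Theory.

(* Proof idea.  In the Alexander quandle a * b = t a + (1 - t) b on a field *)
(* one has a *^z b = t^z a + (1 - t^z) b, so the colourings of a diagram D  *)
(* with label z form the left kernel of a matrix M_D(u) whose entries are   *)
(* affine in u = t^z, and a_X(D, z) = narcs D - rank M_D(t^z) - 1 depends   *)
(* only on u.  Put u = tbar^z in F(p,h).  Since u <> 0, its minimal         *)
(* polynomial h' over F_p is monic irreducible with h'(0) <> 0 and positive *)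
(* breadth, and evaluation at u embeds the field F(p,h') = F_p[t]/(h') into *)
(* F(p,h), sending tbar to u.  Field embeddings preserve ranks, hence       *)
(* a(F(p,h), z) = a(F(p,h'), 1): this is the first claim, and the second    *)
(* follows at once.  For the third, every a_X(D, z) is at most narcs D, so  *)
(* the supremum over all (p, h, z) is a maximum, which the first claim      *)
(* realises with label 1.                                                   *)

Definition coloring_matrix (R : comNzRingType) (D : diagram) (u : R) :
    'M[R]_(narcs D, size (xings D)) :=
  \matrix_(i, j) (let x := tnth (in_tuple (xings D)) j in
    (i == x_left x)%:R - u * (i == x_right x)%:R - (1 - u) * (i == x_over x)%:R).

Lemma sum_mul_delta (R : comNzRingType) n (c : 'rV[R]_n) (a : 'I_n) :
  \sum_i c 0 i * (i == a)%:R = c 0 a.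
Proof.
rewrite (bigD1 a) //= eqxx mulr1 big1 ?addr0 // => i /negbTE ->.
by rewrite mulr0.
Qed.

Lemma mul_coloring_matrix (R : comNzRingType) (D : diagram) (u : R)
    (c : 'rV[R]_(narcs D)) j :
  let x := tnth (in_tuple (xings D)) j in
  (c *m coloring_matrix D u) 0 j =
    c 0 (x_left x) - u * c 0 (x_right x) - (1 - u) * c 0 (x_over x).
Proof.
move=> x; rewrite !mxE.
under eq_bigr => i _ do
  rewrite mxE mulrBr mulrBr (mulrCA _ u) (mulrCA _ (1 - u)).
by rewrite !sumrB -!mulr_sumr !sum_mul_delta.
Qed.

Lemma qpow_alex (F : fieldType) (t : F) z a b :
  qpow (alex_op t) z a b = t ^+ z * a + (1 - t ^+ z) * b.
Proof.
elim: z => [|z IH]; first by rewrite /qpow /= expr0 mul1r subrr mul0r addr0.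
by rewrite /qpow iterS -/(qpow _ _ _ _) IH /alex_op exprS; ring.
Qed.

Lemma is_coloring_kernel (F : fieldType) (t : F) (D : diagram) z
    (c : 'rV[F]_(narcs D)) :
  is_coloring (alex_op t) D z (fun i => c 0 i) =
    (c *m coloring_matrix D (t ^+ z) == 0).
Proof.
rewrite /is_coloring; apply/allP/eqP => [col | ker x x_in].
  apply/rowP => j; rewrite [RHS]mxE mul_coloring_matrix.
  have /eqP -> := col _ (mem_tnth j (in_tuple (xings D))).
  by rewrite qpow_alex; ring.
have /tnthP [j ->] : x \in in_tuple (xings D) by [].
apply/eqP; have := congr1 (fun m : 'M[F]_(1, size (xings D)) => m 0 j) ker.
rewrite mul_coloring_matrix mxE qpow_alex => /eqP.
by rewrite -addrA -opprD subr_eq0 => /eqP.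
Qed.

(* Over a finite field the span of the left kernel of M, listed as a set, *)
(* has dimension n - rank M; proved by counting its elements.             *)
Lemma dim_span_kernel (F : finFieldType) n k (M : 'M[F]_(n, k)) :
  \dim <<enum [set c : 'rV[F]_n | c *m M == 0%R]>>%VS = (n - \rank M)%N.
Proof.
set S := [set c : 'rV[F]_n | c *m M == 0]; set V := <<enum S>>%VS.
have memV c : (c \in V) = (c \in S).
  apply/idP/idP => [cV | cS]; last by apply: memv_span; rewrite mem_enum.
  rewrite (coord_span cV) inE mulmx_suml big1 // => i _.
  have : (enum_tuple S)`_i \in S by rewrite -mem_enum mem_nth // -cardE.
  by rewrite inE -scalemxAl => /eqP ->; rewrite scaler0.
have cardV : #|V| = #|rowg (kermx M)|.
  by apply: eq_card => c; rewrite memV !inE; apply/eqP/sub_kermxP.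
move: cardV; rewrite card_vspace card_rowg mxrank_ker.
exact/expnI/card_finNzRing_gt1.
Qed.

Lemma a_inv_rank p (h : {poly 'F_p}) (hI : monic_irreducible_poly h) D z :
  a_inv hI D z = (narcs D - \rank (coloring_matrix D (tbar hI ^+ z))).-1.
Proof.
rewrite /a_inv /coloring_dim -dim_span_kernel.
suff -> : colorings hI D z = [set c | c *m coloring_matrix D (tbar hI ^+ z) == 0]
  by [].
by apply/setP => c; rewrite !inE is_coloring_kernel.
Qed.

Lemma a_inv_le_narcs p (h : {poly 'F_p}) (hI : monic_irreducible_poly h) D z :
  (a_inv hI D z <= narcs D)%N.
Proof. by rewrite a_inv_rank (leq_trans (leq_pred _)) ?leq_subr. Qed.

Lemma rank_coloring_matrix_map (F K : fieldType) (f : {rmorphism F -> K})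
    (D : diagram) (u : F) :
  \rank (coloring_matrix D (f u)) = \rank (coloring_matrix D u).
Proof.
rewrite -(mxrank_map f); congr (\rank _); apply/matrixP => i j.
by rewrite !mxE /= !(rmorphB, rmorphM, rmorph1, rmorph_nat).
Qed.

Section QuotientEmbedding.
Variables (F : fieldType) (L : fieldExtType F) (s : L).
Variables (m : {poly F}) (mI : monic_irreducible_poly m).
Hypothesis m_root : root (map_poly (in_alg L) m) s.

Lemma horner_alg_rmodp P :
  horner_alg s (Pdiv.CommonRing.rmodp P (mk_monic m)) = horner_alg s P.
Proof.
rewrite (mk_monicE mI) [in RHS](Pdiv.RingMonic.rdivp_eq mI.2 P).
by rewrite rmorphD rmorphM /= [horner_alg s m](rootP m_root) mulr0 add0r.
Qed.

Definition qfpoly_eval (q : {poly %/ m with mI}) : L := horner_alg s (val q).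

Fact qfpoly_eval_zmod : zmod_morphism qfpoly_eval.
Proof. by move=> a b; rewrite /qfpoly_eval -rmorphB. Qed.

Fact qfpoly_eval_monoid : monoid_morphism qfpoly_eval.
Proof.
split; first by rewrite /qfpoly_eval /= horner_algC scale1r.
by move=> a b; rewrite /qfpoly_eval /= horner_alg_rmodp rmorphM.
Qed.

HB.instance Definition _ := GRing.isZmodMorphism.Build
  {poly %/ m with mI} L qfpoly_eval qfpoly_eval_zmod.
HB.instance Definition _ := GRing.isMonoidMorphism.Build
  {poly %/ m with mI} L qfpoly_eval qfpoly_eval_monoid.

Lemma qfpoly_eval_qX : qfpoly_eval 'qX = s.
Proof. by rewrite /qfpoly_eval /= horner_alg_rmodp horner_algX. Qed.

Lemma rank_coloring_matrix_qX (D : diagram) :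
  \rank (coloring_matrix D ('qX : {poly %/ m with mI})) =
  \rank (coloring_matrix D s).
Proof.
rewrite -(rank_coloring_matrix_map qfpoly_eval).
by congr (\rank (coloring_matrix D _)); exact: qfpoly_eval_qX.
Qed.

End QuotientEmbedding.

(* Every element of a finite extension L of F is a root of a monic         *)
(* irreducible polynomial over F: its minimal polynomial over the base      *)
(* field, whose coefficients are pulled back to F.                          *)
Lemma base_minPoly (F : fieldType) (L : fieldExtType F) (s : L) :
  exists m : {poly F},
    [/\ m \is monic, irreducible_poly m & root (map_poly (in_alg L) m) s].
Proof.
have /polyOver1P [m Em] := minPolyOver 1%AS s.
have m_root : root (map_poly (in_alg L) m) s by rewrite -Em root_minPoly.
have m_monic : m \is monic by rewrite -(map_monic (in_alg L)) -Em monic_minPoly.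
exists m; split => //.
apply/(subfx_irreducibleP m_root (monic_neq0 m_monic)) => q q_root q0.
rewrite -(size_map_poly (in_alg L) m) -(size_map_poly (in_alg L) q) -Em.
apply: dvdp_leq; first by rewrite map_poly_eq0.
by apply: minPoly_dvdp q_root; apply/polyOver1P; exists q.
Qed.

Lemma monic_dvd_irreducible (F : fieldType) (d q : {poly F}) :
  irreducible_poly q -> d \is monic -> q \is monic -> (1 < size d)%N ->
  d %| q -> d = q.
Proof.
move=> q_irr d_monic q_monic d_size d_dvd.
have [/eqp_size|d_q] := irredp_XsubCP q_irr d_dvd.
  by rewrite size_poly1 => d1; rewrite d1 in d_size.
by apply/eqP; rewrite -eqp_monic.
Qed.

(* A monic irreducible polynomial with a nonzero root has nonzero constant *)
(* term (otherwise it would be t itself).                                  *)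
Lemma irreducible_root_coef0 (F : fieldType) (L : fieldExtType F) (s : L) (m : {poly F}) :
  s != 0 -> irreducible_poly m -> m \is monic ->
  root (map_poly (in_alg L) m) s -> m.[0] != 0.
Proof.
move=> s0 m_irr m_monic m_root; apply: contraNneq s0 => m0.
have X_dvd : 'X %| m by rewrite -[X in X %| _]subr0 -root_factor_theorem /root m0.
have Xm : 'X = m by apply: monic_dvd_irreducible; rewrite ?monicX ?size_polyX.
by move: m_root; rewrite -Xm map_polyX rootX.
Qed.

(* In F[t]/(h), tbar is nonzero as soon as h(0) <> 0, i.e. t does not divide h. *)
Lemma qX_neq0 (F : fieldType) (h : {poly F}) (hI : monic_irreducible_poly h) :
  h.[0] != 0 -> 'qX != 0 :> {poly %/ h with hI}.
Proof.
move=> h0; apply: contraNneq h0 => qX0.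
have : val ('qX : {poly %/ h with hI}) = 0 by rewrite qX0.
rewrite /= (mk_monicE hI) => rmodX.
have h_dvd : h %| 'X by apply/modp_eq0P; rewrite modpE rmodX scaler0.
have hX : h = 'X - 0%:P.
  apply: monic_dvd_irreducible (irredp_XsubC 0) hI.2 (monicXsubC 0) hI.1.1 _.
  by rewrite subr0.
by rewrite hX subr0 hornerX.
Qed.

(* Label reduction: a_X(D, z) for X = F(p,h) equals a_X'(D, 1) for         *)
(* X' = F(p,h'), where h' is the minimal polynomial of tbar^z over F_p.     *)
Lemma a_inv_label_one p (h : {poly 'F_p}) (hI : monic_irreducible_poly h) D z :
  admissible h -> exists (h' : {poly 'F_p}) (hI' : monic_irreducible_poly h'),
    admissible h' /\ a_inv hI D z = a_inv hI' D 1.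
Proof.
case=> p_prime p_odd h0 _; set u := tbar hI ^+ z.
have u0 : u != 0 by rewrite expf_neq0 // qX_neq0.
have [h' [h'_monic h'_irr h'_root]] := base_minPoly u.
pose hI' : monic_irreducible_poly h' := (h'_irr, h'_monic).
exists h', hI'; split.
  split => //; first exact: irreducible_root_coef0 u0 h'_irr h'_monic h'_root.
  by rewrite /breadth -subn1 subn_gt0 h'_irr.1.
by rewrite !a_inv_rank expr1 (rank_coloring_matrix_qX hI' h'_root).
Qed.

Lemma bounded_nat_max (P : nat -> Prop) B k0 :
  P k0 -> (forall k, P k -> k <= B)%N ->
  exists k, P k /\ forall k', P k' -> (k' <= k)%N.
Proof.
elim: B k0 => [|B IH] k0 Pk0 P_le.
  by exists k0; split => // k' /P_le; rewrite leqn0 => /eqP ->.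
have [PB | nPB] := classic (P B.+1); first by exists B.+1.
apply: (IH k0 Pk0) => k Pk; move: (P_le k Pk); rewrite leq_eqVlt.
by case/orP => [/eqP ek | //]; rewrite ek in Pk.
Qed.

(* An admissible parameter exists: F(3, t + 1), the dihedral quandle R_3. *)
Definition R3_poly : {poly 'F_3} := 'X - (-1)%:P.

Lemma R3_poly_irr : monic_irreducible_poly R3_poly.
Proof. exact: (irredp_XsubC _, monicXsubC _). Qed.

Lemma R3_admissible : admissible R3_poly.
Proof.
split => //; last by rewrite /breadth size_XsubC.
by rewrite /R3_poly !hornerE opprK oner_neq0.
Qed.

Theorem lemma8p1 :
  (* main (precise) statement *)
  (forall D : diagram, well_formed D ->
   forall (p : nat) (h : {poly 'F_p}) (hI : monic_irreducible_poly h) (z : nat),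
     admissible h -> (1 <= z)%N ->
     exists (h' : {poly 'F_p}) (hI' : monic_irreducible_poly h'),
       admissible h' /\ (a_inv hI D z <= a_inv hI' D 1)%N)
  /\
  (* A_Q(L) = sup_X a_X(L, P_m, 1): both suprema (over z >= 0) bound the same naturals *)
  (forall D : diagram, well_formed D -> forall k : nat,
     (exists (p : nat) (h : {poly 'F_p}) (hI : monic_irreducible_poly h) (z : nat),
        admissible h /\ (k <= a_inv hI D z)%N) <->
     (exists (p : nat) (h : {poly 'F_p}) (hI : monic_irreducible_poly h),
        admissible h /\ (k <= a_inv hI D 1)%N))
  /\
  (* for knots the supremum A_Q(K) is attained as some a_X(K,1) *)
  (forall D : diagram, well_formed D -> is_knot_diagram D ->
     exists (p : nat) (h : {poly 'F_p}) (hI : monic_irreducible_poly h),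
       admissible h /\
       forall (p' : nat) (h' : {poly 'F_p'}) (hI' : monic_irreducible_poly h') (z : nat),
         admissible h' -> (a_inv hI' D z <= a_inv hI D 1)%N).
Proof.
split; [|split].
- move=> D _ p h hI z h_adm _.
  have [h' [hI' [h'_adm ->]]] := a_inv_label_one hI D z h_adm.
  by exists h', hI'.
- move=> D _ k; split => [[p [h [hI [z [h_adm k_le]]]]] | [p [h [hI [h_adm k_le]]]]].
    have [h' [hI' [h'_adm e]]] := a_inv_label_one hI D z h_adm.
    by exists p, h', hI'; rewrite -e.
  by exists p, h, hI, 1%N.
- move=> D _ _.
  (* the values of a_X(D, z) form a nonempty set of naturals bounded by narcs D *)
  pose attained k := exists (p : nat) (h : {poly 'F_p}) (hI : monic_irreducible_poly h)
    (z : nat), admissible h /\ (k <= a_inv hI D z)%N.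
  have attained0 : attained 0%N.
    by exists 3%N, R3_poly, R3_poly_irr, 0%N; split; [exact: R3_admissible |].
  have attained_le k : attained k -> (k <= narcs D)%N.
    by case=> [p [h [hI [z [_ k_le]]]]]; apply: leq_trans k_le (a_inv_le_narcs _ _ _).
  have [k [[p [h [hI [z [h_adm k_le]]]]] k_max]] := bounded_nat_max attained0 attained_le.
  have [h' [hI' [h'_adm e]]] := a_inv_label_one hI D z h_adm.
  exists p, h', hI'; split => // p' h'' hI'' z' adm''.
  by rewrite -e (leq_trans _ k_le) //; apply: k_max; exists p', h'', hI'', z'.
Qed.
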